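(* Let $P$ be a primitive monoid containing order-ideals $I,I'$ with $I\cap I'=0$, and let $\varphi\colon I\to I'$ be a monoid isomorphism. Let $Q$ be the crowned pushout of $(P,I,I',\varphi)$ with projection $\pi\colon P\to Q$. Then $Q$ is a primitive monoid, $\pi$ maps $\mathbb P(P)\setminus\mathbb P(I')$ bijectively onto $\mathbb P(Q)$, and under this identification the order on $\mathbb P(Q)$ is the one generated by the order of $\mathbb P(P)$ restricted to $\mathbb P(P)\setminus\mathbb P(I')$ together with the additional relations $p<q$ whenever $p\in\mathbb P(I)$, $q\in\mathbb P(P)\setminus(\mathbb P(I)\sqcup\mathbb P(I'))$ and $\varphi(p)<q$ in $\mathbb P(P)$. Moreover, a prime $p\in\mathbb P(Q)$ is free in $Q$ if and only if it is free in $P$.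
   Context: Monoids are abelian. Algebraic preorder: $x\le y$ iff $y=x+z$. A prime is $p$ with $p\not\le0$ and $p\le a+b\Rightarrow p\le a$ or $p\le b$; a primitive monoid is an antisymmetric ($\le$ a partial order), primely generated (every element a sum of primes) refinement monoid; $\mathbb P(M)$ denotes its set of primes ordered by the algebraic order, and for an order-ideal $S$, $\mathbb P(S)=\mathbb P(M)\cap S$. A prime $p$ is free if $p+p\ne p$. An order-ideal is a nonempty $I$ with $x+y\in I\iff x,y\in I$. The crowned pushout of $(P,I,I',\varphi)$ is the coequalizer, in the category of monoids, of the inclusion $I\to P$ and the composite $I\xrightarrow{\varphi}I'\hookrightarrow P$. *)

(* Commutative monoids are MathComp [nmodType]s
   (additive commutative monoids: 0, +). *)
From HB Require Import structures.
From mathcomp Require Import all_boot all_order all_algebra.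
From Stdlib Require Import Relations.
Set Implicit Arguments. Unset Strict Implicit. Unset Printing Implicit Defensive.
Import GRing.Theory.
Local Open Scope ring_scope.

Section MonoidDefs.
Variable M : nmodType.

Definition alg_le (x y : M) : Prop := exists z : M, y = x + z.

Definition alg_lt (x y : M) : Prop := alg_le x y /\ x <> y.

Definition is_prime (p : M) : Prop :=
  ~ alg_le p 0 /\ forall a b : M, alg_le p (a + b) -> alg_le p a \/ alg_le p b.

Definition is_free (p : M) : Prop := p + p <> p.

Definition antisymmetric_monoid : Prop :=
  forall x y : M, alg_le x y -> alg_le y x -> x = y.

Definition primely_generated : Prop :=
  forall x : M, exists s : seq M,
    (forall p, p \in s -> is_prime p) /\ x = \sum_(p <- s) p.

Definition refinement_monoid : Prop :=
  forall a0 a1 b0 b1 : M, a0 + a1 = b0 + b1 ->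
    exists c00 c01 c10 c11 : M,
      [/\ a0 = c00 + c01, a1 = c10 + c11, b0 = c00 + c10 & b1 = c01 + c11].

Definition primitive_monoid : Prop :=
  [/\ antisymmetric_monoid, primely_generated & refinement_monoid].

Definition order_ideal (I : M -> Prop) : Prop :=
  (exists x, I x) /\ forall x y : M, I (x + y) <-> (I x /\ I y).

End MonoidDefs.

Definition monoid_morph (M N : nmodType) (f : M -> N) : Prop :=
  f 0 = 0 /\ forall x y, f (x + y) = f x + f y.

(* phi : P -> P restricted to I is a monoid isomorphism I -> I' *)
Definition ideal_iso (P : nmodType) (I I' : P -> Prop) (phi : P -> P) : Prop :=
  [/\ phi 0 = 0,
      (forall x y, I x -> I y -> phi (x + y) = phi x + phi y),
      (forall x, I x -> I' (phi x)),
      (forall x y, I x -> I y -> phi x = phi y -> x = y) &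
      (forall y, I' y -> exists2 x, I x & phi x = y)].

(* (Q, pi) is the crowned pushout of (P, I, I', phi): the coequalizer, in the
   category of (commutative) monoids, of the inclusion I -> P and the composite
   I -> I' -> P. *)
Definition crowned_pushout (P : nmodType) (I I' : P -> Prop) (phi : P -> P)
    (Q : nmodType) (pi : P -> Q) : Prop :=
  [/\ monoid_morph pi,
      (forall x, I x -> pi x = pi (phi x)) &
      (forall (N : nmodType) (f : P -> N), monoid_morph f ->
         (forall x, I x -> f x = f (phi x)) ->
         exists g : Q -> N,
           [/\ monoid_morph g, (forall x, g (pi x) = f x) &
               (forall g' : Q -> N, monoid_morph g' ->
                  (forall x, g' (pi x) = f x) -> forall y, g' y = g y)])].

Definition S_primes (P : nmodType) (I' : P -> Prop) (p : P) : Prop :=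
  is_prime p /\ ~ I' p.

Definition gen_rel (P : nmodType) (I I' : P -> Prop) (phi : P -> P) (p q : P)
    : Prop :=
  [/\ S_primes I' p, S_primes I' q &
      (alg_le p q \/
       [/\ I p, ~ I q, ~ I' q & alg_lt (phi p) q])].

Definition gen_order (P : nmodType) (I I' : P -> Prop) (phi : P -> P) :
  P -> P -> Prop := clos_refl_trans P (gen_rel I I' phi).

From HB Require Import structures.
From mathcomp Require Import all_boot all_order all_algebra zify.
From Stdlib Require Import Classical ClassicalEpsilon.
From Stdlib Require Import FunctionalExtensionality PropExtensionality Relations.
Set Implicit Arguments. Unset Strict Implicit. Unset Printing Implicit Defensive.
Import GRing.Theory.
Local Open Scope ring_scope.

(* The pushout Q is only given through its universal property, so two concrete
   monoids are used as targets of morphisms out of Q: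
   - the quotient of P by the congruence [twist] generated by c + a ~ c + phi a
     (a in I); factoring through it shows that pi is surjective with kernel
     [twist], and a refinement argument for single twist steps then gives
     refinement in Q;
   - the extended naturals N u {oo}: for a prime p of P outside I', the
     multiplicity of p (plus that of phi p when p lies in I) is a
     phi-invariant morphism [weight p], hence descends to Q.  It detects
     exactly the elements above pi p, which yields the primes of Q, the order
     between them, and the preservation of freeness.
   Antisymmetry of Q follows from an absorption lemma (X = X + T implies
   X = X + W for W <= T), proved prime by prime with the same detectors; a
   free prime of unbounded multiplicity is absorbed by a prime below it. *)

Section AlgebraicPreorder.
Variable M : nmodType.
Implicit Types (x y z u v p : M) (s : seq M).

Lemma alg_le_refl x : alg_le x x.
Proof. by exists 0; rewrite addr0. Qed.

Lemma alg_le_trans x y z : alg_le x y -> alg_le y z -> alg_le x z.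
Proof. by move=> [u ->] [v ->]; exists (u + v); rewrite addrA. Qed.

Lemma alg_le_addr x y : alg_le x (x + y).
Proof. by exists y. Qed.

Lemma alg_le_addl x y : alg_le y (x + y).
Proof. by exists x; rewrite addrC. Qed.

Lemma alg_le_add x y u v : alg_le x y -> alg_le u v -> alg_le (x + u) (y + v).
Proof. by move=> [a ->] [b ->]; exists (a + b); rewrite addrACA. Qed.

Lemma alg_le0x x : alg_le 0 x.
Proof. by exists x; rewrite add0r. Qed.

Lemma alg_le_mulrn x (j k : nat) : (j <= k)%N -> alg_le (x *+ j) (x *+ k).
Proof. by move=> hjk; exists (x *+ (k - j)); rewrite -mulrnDr subnKC. Qed.

Lemma alg_le_sum_mem s x : x \in s -> alg_le x (\sum_(y <- s) y).
Proof.
elim: s => [|y s IH] //; rewrite in_cons big_cons => /orP [/eqP ->|xs].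
  exact: alg_le_addr.
exact: alg_le_trans (IH xs) (alg_le_addl _ _).
Qed.

Lemma prime_neq0 p : is_prime p -> p <> 0.
Proof. by move=> [p_not0 _] p0; apply: p_not0; rewrite p0; apply: alg_le_refl. Qed.

Lemma prime_le_sum p s : is_prime p -> alg_le p (\sum_(y <- s) y) ->
  exists2 y, y \in s & alg_le p y.
Proof.
move=> [p_not0 pP]; elim: s => [|y s IH]; first by rewrite big_nil.
rewrite big_cons => /pP [py|ps]; first by exists y; rewrite ?mem_head.
by have [z zs pz] := IH ps; exists z; rewrite // in_cons zs orbT.
Qed.

Lemma ideal0 (J : M -> Prop) : order_ideal J -> J 0.
Proof. by case=> [[x Jx] JD]; case: (JD x 0); rewrite addr0 => /(_ Jx) []. Qed.

Lemma ideal_le (J : M -> Prop) x y : order_ideal J -> alg_le x y -> J y -> J x.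
Proof. by move=> [_ JD] [z ->] /JD []. Qed.

Lemma idealD (J : M -> Prop) x y : order_ideal J -> J x -> J y -> J (x + y).
Proof. by move=> [_ JD] Jx Jy; apply/JD. Qed.

Lemma ideal_mulrn (J : M -> Prop) x n : order_ideal J -> J x -> J (x *+ n).
Proof.
move=> HJ Jx; elim: n => [|n IH]; first by rewrite mulr0n; apply: ideal0.
by rewrite mulrS; apply: idealD.
Qed.

End AlgebraicPreorder.

Section Morphisms.
Variables (M N K : nmodType).

Lemma morph_le (f : M -> N) x y : monoid_morph f -> alg_le x y -> alg_le (f x) (f y).
Proof. by move=> [_ fD] [z ->]; exists (f z); rewrite fD. Qed.

Lemma morph_mulrn (f : M -> N) x n : monoid_morph f -> f (x *+ n) = f x *+ n.
Proof. by move=> [f0 fD]; elim: n => [|n IH]; rewrite ?mulr0n // !mulrS fD IH. Qed.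

Lemma morph_sum (f : M -> N) (s : seq M) : monoid_morph f ->
  f (\sum_(x <- s) x) = \sum_(x <- s) f x.
Proof. by move=> [f0 fD]; elim: s => [|x s IH]; rewrite ?big_nil // !big_cons fD IH. Qed.

Lemma morph_comp (f : M -> N) (g : N -> K) :
  monoid_morph f -> monoid_morph g -> monoid_morph (fun x => g (f x)).
Proof. by move=> [f0 fD] [g0 gD]; split=> [|x y]; rewrite ?f0 ?fD. Qed.

End Morphisms.

(* The extended naturals N u {oo}, with None standing for oo. *)
Definition xnat : Type := option nat.
HB.instance Definition _ := Choice.on xnat.

Definition xnat_add (a b : xnat) : xnat :=
  if (a, b) is (Some m, Some n) then Some (m + n)%N else None.

Lemma xnat_addA : associative xnat_add.
Proof. by case=> [a|] [b|] [c|] //=; rewrite /xnat_add addnA. Qed.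
Lemma xnat_addC : commutative xnat_add.
Proof. by case=> [a|] [b|] //=; rewrite /xnat_add addnC. Qed.
Lemma xnat_add0 : left_id (Some 0%N : xnat) xnat_add.
Proof. by case. Qed.
HB.instance Definition _ := GRing.isNmodule.Build xnat xnat_addA xnat_addC xnat_add0.

Lemma xnat_add_inf (a b : xnat) : a + b = None -> a = None \/ b = None.
Proof. by case: a b => [m|] [n|]; auto. Qed.

Lemma xnat_add_eq0 (a b : xnat) : a + b = 0 -> a = 0 /\ b = 0.
Proof.
case: a b => [m|] [n|] //= [] /eqP.
by rewrite addn_eq0 => /andP [/eqP -> /eqP ->].
Qed.

Lemma xnat_natmul n : (Some 1%N : xnat) *+ n = Some n.
Proof. by elim: n => [//|n IH]; rewrite mulrS IH. Qed.

Lemma xnat_le (m n : nat) : alg_le (Some m : xnat) (Some n) -> (m <= n)%N.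
Proof. by case=> [[k|] //= [->]]; rewrite leq_addr. Qed.

Lemma xnat_le0 (a : xnat) : alg_le a 0 -> a = 0.
Proof. by move=> [z /esym /xnat_add_eq0 []]. Qed.

Section Multiplicity.
Variable M : nmodType.
Hypotheses (antiM : antisymmetric_monoid M) (pgenM : primely_generated M)
  (refM : refinement_monoid M).
Implicit Types (x y r : M) (s : seq M).

Lemma split_mulrn r (k : nat) x y : is_prime r -> alg_le (r *+ k) (x + y) ->
  exists k0 k1, [/\ (k0 + k1)%N = k, alg_le (r *+ k0) x & alg_le (r *+ k1) y].
Proof.
move=> [_ rP]; elim: k x y => [|k IH] x y.
  by move=> _; exists 0%N, 0%N; split; rewrite ?mulr0n //; apply: alg_le0x.
move=> [z]; rewrite mulrSr -addrA => /refM [c00 [c01 [c10 [c11 [ex ey ek er]]]]].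
have [k0 [k1 [<- h0 h1]]] : exists k0 k1,
    [/\ (k0 + k1)%N = k, alg_le (r *+ k0) c00 & alg_le (r *+ k1) c10].
  by apply: IH; rewrite -ek; apply: alg_le_refl.
have /rP [h|h] : alg_le r (c01 + c11) by rewrite -er; apply: alg_le_addr.
- exists k0.+1, k1; split; first by rewrite addSn.
    by rewrite ex mulrSr; apply: alg_le_add.
  by rewrite ey; apply: alg_le_trans h1 (alg_le_addr _ _).
- exists k0, k1.+1; split; first by rewrite addnS.
    by rewrite ex; apply: alg_le_trans h0 (alg_le_addr _ _).
  by rewrite ey mulrSr; apply: alg_le_add.
Qed.

(* [mult r x] is the multiplicity of r in x: the largest m with r *+ m <= x,
   or oo (None) when r *+ m <= x for every m. *)
Definition mult_spec r x (o : xnat) : Prop :=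
  if o is Some m then alg_le (r *+ m) x /\ ~ alg_le (r *+ m.+1) x
  else forall k : nat, alg_le (r *+ k) x.

Definition mult r x : xnat := epsilon (inhabits None) (mult_spec r x).

Lemma multP r x : mult_spec r x (mult r x).
Proof.
rewrite /mult; apply: epsilon_spec.
have [bounded|] := classic (forall k : nat, alg_le (r *+ k) x); first by exists None.
move=> /not_all_ex_not [k]; elim: k => [|k IH] hk.
  by case: hk; apply: alg_le0x.
by have [hk'|/IH //] := classic (alg_le (r *+ k) x); exists (Some k).
Qed.

Lemma mult_spec_uniq r x o o' : mult_spec r x o -> mult_spec r x o' -> o = o'.
Proof.
have below m m' : alg_le (r *+ m) x -> ~ alg_le (r *+ m'.+1) x -> (m <= m')%N.
  move=> h1 h2; rewrite leqNgt; apply/negP => lt.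
  by apply: h2; apply: alg_le_trans (alg_le_mulrn _ lt) h1.
case: o => [m|]; case: o' => [m'|] //=.
- move=> [h1 h2] [h3 h4]; congr Some.
  by apply/eqP; rewrite eqn_leq (below _ _ h1 h4) (below _ _ h3 h2).
- by move=> [_ h2] h; case: h2; apply: h.
- by move=> h [_ h2]; case: h2; apply: h.
Qed.

Lemma mult_eq r x o : mult_spec r x o -> mult r x = o.
Proof. exact: mult_spec_uniq (multP r x). Qed.

Lemma mult_eq0 r x : mult r x = 0 <-> ~ alg_le r x.
Proof.
split=> [h|h]; last by apply: mult_eq; split; [apply: alg_le0x | rewrite mulr1n].
by have := multP r x; rewrite h /= mulr1n => -[].
Qed.

Lemma mult_inf r x : mult r x = None -> forall k : nat, alg_le (r *+ k) x.
Proof. by move=> h; have := multP r x; rewrite h. Qed.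

Lemma mult_morph r : is_prime r -> monoid_morph (mult r).
Proof.
move=> pr; split; first by apply/mult_eq0; case: pr.
move=> x y; apply: mult_eq; have := multP r x; have := multP r y.
case: (mult r x) => [a|]; case: (mult r y) => [b|] //=.
- move=> [hb1 hb2] [ha1 ha2].
  split; first by rewrite mulrnDr; apply: alg_le_add.
  move=> /(split_mulrn pr) [k0 [k1 [hk h0 h1]]].
  have k0a : (k0 <= a)%N.
    by rewrite leqNgt; apply/negP => lt; apply: ha2; apply: alg_le_trans (alg_le_mulrn _ lt) h0.
  have k1b : (k1 <= b)%N.
    by rewrite leqNgt; apply/negP => lt; apply: hb2; apply: alg_le_trans (alg_le_mulrn _ lt) h1.
  by move: (leq_add k0a k1b); rewrite hk ltnn.
- by move=> hy _ k; apply: alg_le_trans (hy k) (alg_le_addl _ _).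
- by move=> _ hx k; apply: alg_le_trans (hx k) (alg_le_addr _ _).
- by move=> _ hx k; apply: alg_le_trans (hx k) (alg_le_addr _ _).
Qed.

Lemma mult_self r : is_free r -> mult r r = Some 1%N.
Proof.
move=> fr; apply: mult_eq; split; first by rewrite mulr1n; apply: alg_le_refl.
by rewrite mulr2n => h; apply: fr; apply: antiM h (alg_le_addr _ _).
Qed.

(* Pigeonhole: if r *+ k lies below a sum of fewer than k terms, then r *+ 2
   lies below one of the terms. *)
Lemma double_below_summand r s (k : nat) : is_prime r -> (size s < k)%N ->
  alg_le (r *+ k) (\sum_(q <- s) q) -> exists2 q, q \in s & alg_le (r *+ 2) q.
Proof.
move=> pr; elim: s k => [|q s IH] k /= hk.
  rewrite big_nil => h; case: (proj1 pr).
  by apply: alg_le_trans h; rewrite -{1}(mulr1n r); apply: alg_le_mulrn.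
rewrite big_cons => /(split_mulrn pr) [k0 [k1 [ek h0 h1]]].
have [two_k0|k0_small] := leqP 2 k0.
  by exists q; [rewrite mem_head | apply: alg_le_trans (alg_le_mulrn _ two_k0) h0].
have [q' q's hq'] : exists2 q', q' \in s & alg_le (r *+ 2) q'.
  by apply: (IH k1) h1; lia.
by exists q' => //; rewrite in_cons q's orbT.
Qed.

Lemma free_absorb r x : is_prime r -> is_free r ->
  (forall k : nat, alg_le (r *+ k) x) -> exists q, alg_le q x /\ r + q = q.
Proof.
move=> pr fr hk; have [s [sp ex]] := pgenM x; rewrite ex in hk *.
have [q qs [w ew]] := double_below_summand pr (ltnSn (size s)) (hk _).
rewrite mulr2n in ew; have [_ qP] := sp q qs.
have q_not_le_r : ~ alg_le q r.
  move=> hqr; apply: fr; apply: antiM (alg_le_addr _ _).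
  by apply: alg_le_trans hqr; exists w.
exists q; split; first exact: alg_le_sum_mem.
have /qP [//|/qP [//|[w' ew']]] : alg_le q (r + (r + w)).
  by rewrite addrA -ew; apply: alg_le_refl.
apply: antiM (alg_le_addl _ _).
by exists (r + w'); rewrite {1}ew ew' addrACA.
Qed.

End Multiplicity.

(* A congruence on a commutative monoid and the quotient monoid it defines;
   classes are represented by canonical representatives chosen by epsilon. *)
Record congruence (M : nmodType) := Congruence {
  cong_rel : M -> M -> Prop;
  cong_equiv : equivalence M cong_rel;
  cong_addr : forall x y z, cong_rel x y -> cong_rel (x + z) (y + z) }.

Section QuotientCarrier.
Variables (M : nmodType) (c : congruence M).
Implicit Types x y z : M.

Lemma cong_refl x : cong_rel c x x.
Proof. exact: equiv_refl _ _ (cong_equiv c) x. Qed.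

Lemma cong_sym x y : cong_rel c x y -> cong_rel c y x.
Proof. exact: equiv_sym _ _ (cong_equiv c) x y. Qed.

Lemma cong_trans x y z : cong_rel c x y -> cong_rel c y z -> cong_rel c x z.
Proof. exact: equiv_trans _ _ (cong_equiv c) x y z. Qed.

Definition cong_repr x : M := epsilon (inhabits 0) (cong_rel c x).

Lemma cong_repr_rel x : cong_rel c x (cong_repr x).
Proof. by apply: epsilon_spec; exists x; apply: cong_refl. Qed.

Lemma cong_repr_eq x y : cong_rel c x y -> cong_repr x = cong_repr y.
Proof.
move=> hxy; rewrite /cong_repr; congr epsilon.
apply: functional_extensionality => z; apply: propositional_extensionality.
by split; [apply: cong_trans (cong_sym hxy) | apply: cong_trans hxy].
Qed.

Lemma cong_reprK x : cong_repr (cong_repr x) = cong_repr x.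
Proof. by symmetry; apply: cong_repr_eq; apply: cong_repr_rel. Qed.

Lemma cong_addl x y z : cong_rel c x y -> cong_rel c (z + x) (z + y).
Proof. by move=> hxy; rewrite ![z + _]addrC; apply: cong_addr. Qed.

Definition quot : Type := {x : M | cong_repr x == x}.

Definition qpi x : quot := exist _ (cong_repr x) (introT eqP (cong_reprK x)).

Lemma qpi_eq x y : cong_rel c x y -> qpi x = qpi y.
Proof. by move=> hxy; apply: val_inj; apply: cong_repr_eq. Qed.

Lemma qpi_val (a : quot) : qpi (val a) = a.
Proof. by apply: val_inj; case: a => a /= /eqP. Qed.

Lemma qpi_rel x y : qpi x = qpi y -> cong_rel c x y.
Proof.
move=> /(congr1 val) /= exy; apply: cong_trans (cong_repr_rel x) _.
by rewrite exy; apply: cong_sym; apply: cong_repr_rel.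
Qed.

Definition qadd (a b : quot) : quot := qpi (val a + val b).

Lemma qaddA : associative qadd.
Proof.
move=> a b d; apply: qpi_eq.
apply: (cong_trans (y := val a + (val b + val d))).
  by apply: cong_addl; apply: cong_sym; apply: cong_repr_rel.
by rewrite addrA; apply: cong_addr; apply: cong_repr_rel.
Qed.

Lemma qaddC : commutative qadd.
Proof. by move=> a b; rewrite /qadd addrC. Qed.

Lemma qadd0 : left_id (qpi 0) qadd.
Proof.
move=> a; rewrite /qadd -[in RHS](qpi_val a); apply: qpi_eq.
by rewrite -[X in cong_rel c _ X]add0r; apply: cong_addr; apply: cong_sym; apply: cong_repr_rel.
Qed.

End QuotientCarrier.

HB.instance Definition _ (M : nmodType) (c : congruence M) := Choice.on (quot c).
HB.instance Definition _ (M : nmodType) (c : congruence M) :=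
  GRing.isNmodule.Build (quot c) (@qaddA M c) (@qaddC M c) (@qadd0 M c).

Lemma qpi_morph (M : nmodType) (c : congruence M) : monoid_morph (qpi c).
Proof.
split=> // x y; apply: qpi_eq.
apply: (cong_trans (y := cong_repr c x + y)); first by apply: cong_addr; apply: cong_repr_rel.
by apply: cong_addl; apply: cong_repr_rel.
Qed.

Lemma quot0E (M : nmodType) (c : congruence M) : (0 : quot c) = qpi c 0.
Proof. by []. Qed.

Lemma quot_addE (M : nmodType) (c : congruence M) (a b : quot c) :
  a + b = qpi c (val a + val b).
Proof. by []. Qed.

Section IdealIsomorphism.
Variables (P : nmodType) (I I' : P -> Prop) (phi : P -> P).
Hypotheses (antiP : antisymmetric_monoid P) (refP : refinement_monoid P)
  (HI : order_ideal I) (HI' : order_ideal I')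
  (disjI : forall x, I x -> I' x -> x = 0) (isoI : ideal_iso I I' phi).
Implicit Types (x y u v a p q r : P).

Let phi0 : phi 0 = 0. Proof. by case: isoI. Qed.
Let phiD x y : I x -> I y -> phi (x + y) = phi x + phi y.
Proof. by case: isoI => _ phiD _ _ _; apply: phiD. Qed.
Let phiI x : I x -> I' (phi x).
Proof. by case: isoI => _ _ phiI _ _; apply: phiI. Qed.
Let phi_inj x y : I x -> I y -> phi x = phi y -> x = y.
Proof. by case: isoI => _ _ _ phi_inj _; apply: phi_inj. Qed.
Let phi_onto y : I' y -> exists2 x, I x & phi x = y.
Proof. by case: isoI => _ _ _ _ phi_onto; apply: phi_onto. Qed.

Lemma phi_le x y : I x -> I y -> alg_le (phi x) (phi y) <-> alg_le x y.
Proof.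
move=> Ix Iy; split=> [[z ez]|[z ez]].
- have I'z : I' z by apply: ideal_le HI' (alg_le_addl (phi x) z) _; rewrite -ez; apply: phiI.
  have [w Iw ew] := phi_onto I'z; exists w.
  by apply: phi_inj => //; [apply: idealD | rewrite phiD // ew].
- have Iz : I z by apply: ideal_le HI (alg_le_addl x z) _; rewrite -ez.
  by exists (phi z); rewrite ez phiD.
Qed.

Lemma phi_mulrn x n : I x -> phi (x *+ n) = phi x *+ n.
Proof.
move=> Ix; elim: n => [|n IH]; first by rewrite !mulr0n.
by rewrite !mulrS phiD ?IH //; apply: ideal_mulrn.
Qed.

Lemma prime_notI' p : is_prime p -> I p -> ~ I' p.
Proof. by move=> pp Ip I'p; apply: (prime_neq0 pp); apply: disjI. Qed.

Lemma phi_notle p x : is_prime p -> I p -> I x -> ~ alg_le (phi p) x.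
Proof.
move=> pp Ip Ix hle; apply: (prime_neq0 pp); apply: phi_inj (ideal0 HI) _ => //.
by rewrite phi0; apply: disjI (phiI Ip); apply: ideal_le HI hle Ix.
Qed.

Lemma phi_prime p : is_prime p -> I p -> is_prime (phi p).
Proof.
move=> pp Ip; split; first exact: phi_notle (ideal0 HI).
move=> a b [z /refP [c00 [c01 [c10 [c11 [-> -> ep _]]]]]].
have I'c00 : I' c00 by apply: ideal_le HI' (alg_le_addr c00 c10) _; rewrite -ep; apply: phiI.
have I'c10 : I' c10 by apply: ideal_le HI' (alg_le_addl c00 c10) _; rewrite -ep; apply: phiI.
have [d0 Id0 ed0] := phi_onto I'c00; have [d1 Id1 ed1] := phi_onto I'c10.
have ep' : p = d0 + d1.
  by apply: phi_inj => //; [apply: idealD | rewrite phiD // ed0 ed1].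
have /(proj2 pp) [h|h] : alg_le p (d0 + d1) by rewrite -ep'; apply: alg_le_refl.
- by left; apply: alg_le_trans (alg_le_addr _ _); rewrite -ed0; apply/phi_le.
- by right; apply: alg_le_trans (alg_le_addr _ _); rewrite -ed1; apply/phi_le.
Qed.

Lemma phi_free p : I p -> is_free p -> is_free (phi p).
Proof. by move=> Ip fp e; apply: fp; apply: phi_inj; rewrite ?phiD //; apply: idealD. Qed.

Lemma prime_I'_preimage q : is_prime q -> I' q -> exists2 p, is_prime p /\ I p & phi p = q.
Proof.
move=> [q_not0 qP] I'q; have [p Ip ep] := phi_onto I'q; exists p => //; split=> //.
split=> [[z ez]|a b [z /refP [c00 [c01 [c10 [c11 [-> -> ep' _]]]]]]].
  have Iz : I z by apply: ideal_le HI (alg_le_addl p z) _; rewrite -ez; apply: ideal0.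
  by apply: q_not0; exists (phi z); rewrite -ep -phiD // -ez.
have Ic00 : I c00 by apply: ideal_le HI (alg_le_addr c00 c10) _; rewrite -ep'.
have Ic10 : I c10 by apply: ideal_le HI (alg_le_addl c00 c10) _; rewrite -ep'.
have /qP [h|h] : alg_le q (phi c00 + phi c10) by rewrite -phiD // -ep' ep; apply: alg_le_refl.
- by left; apply: alg_le_trans (alg_le_addr _ _); apply/(phi_le Ip Ic00); rewrite ep.
- by right; apply: alg_le_trans (alg_le_addr _ _); apply/(phi_le Ip Ic10); rewrite ep.
Qed.

Lemma mult_phi r x : I r -> I x -> mult (phi r) (phi x) = mult r x.
Proof.
move=> Ir Ix; apply: mult_eq; have := multP r x.
have phi_le_mul k : alg_le (phi r *+ k) (phi x) <-> alg_le (r *+ k) x.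
  by rewrite -phi_mulrn //; apply: phi_le => //; apply: ideal_mulrn.
case: (mult r x) => [m [h1 h2]|h k] /=; last exact/phi_le_mul.
by split; [apply/phi_le_mul | move/phi_le_mul].
Qed.

Definition twist_step u v := exists c a, [/\ I a, u = c + a & v = c + phi a].
Definition twist : P -> P -> Prop := clos_refl_sym_trans P twist_step.

Lemma twist_addr u v w : twist u v -> twist (u + w) (v + w).
Proof.
elim=> [x y [c [a [Ia -> ->]]]|x|x y _ IH|x y z _ IH1 _ IH2].
- by apply: rst_step; exists (c + w), a; split=> //; rewrite addrAC.
- exact: rst_refl.
- exact: rst_sym.
- exact: rst_trans IH1 IH2.
Qed.

Definition twist_congruence : congruence P :=
  Congruence (clos_rst_is_equiv P twist_step) twist_addr.

(* A decomposition of the source of a twist step induces one of its target,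
   by refining the step along the decomposition. *)
Lemma twist_step_split u v a0 a1 : twist_step u v -> u = a0 + a1 ->
  exists b0 b1, [/\ twist_step a0 b0, twist_step a1 b1 & v = b0 + b1].
Proof.
move=> [c [a [Ia -> ->]]] /esym /refP [d00 [d01 [d10 [d11 [-> -> -> ea]]]]].
rewrite ea in Ia *.
have Id01 : I d01 by apply: ideal_le HI (alg_le_addr _ _) Ia.
have Id11 : I d11 by apply: ideal_le HI (alg_le_addl _ _) Ia.
exists (d00 + phi d01), (d10 + phi d11); split; [by exists d00, d01 | by exists d10, d11 |].
by rewrite phiD // addrACA.
Qed.

Lemma twist_step_split_rev u v a0 a1 : twist_step v u -> u = a0 + a1 ->
  exists b0 b1, [/\ twist_step b0 a0, twist_step b1 a1 & v = b0 + b1].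
Proof.
move=> [c [a [Ia -> ->]]] /esym /refP [d00 [d01 [d10 [d11 [-> -> -> ea]]]]].
have I'd01 : I' d01 by apply: ideal_le HI' (alg_le_addr d01 d11) _; rewrite -ea; apply: phiI.
have I'd11 : I' d11 by apply: ideal_le HI' (alg_le_addl d01 d11) _; rewrite -ea; apply: phiI.
have [f0 If0 ef0] := phi_onto I'd01; have [f1 If1 ef1] := phi_onto I'd11.
have -> : a = f0 + f1.
  by apply: phi_inj => //; [apply: idealD | rewrite phiD // ef0 ef1].
exists (d00 + f0), (d10 + f1); split; last by rewrite addrACA.
- by exists d00, f0; rewrite ef0.
- by exists d10, f1; rewrite ef1.
Qed.

Lemma twist_decompose u v : twist u v -> forall a0 a1, u = a0 + a1 ->
  exists b0 b1, [/\ twist a0 b0, twist a1 b1 & v = b0 + b1].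
Proof.
move=> /(@clos_rst_rst1n P twist_step); elim=> [x a0 a1 ->|x y z hxy _ IH a0 a1 ex].
  by exists a0, a1; split=> //; apply: rst_refl.
have [b0 [b1 [h0 h1 ey]]] : exists b0 b1, [/\ twist a0 b0, twist a1 b1 & y = b0 + b1].
  case: hxy => [/twist_step_split|/twist_step_split_rev] /(_ a0 a1 ex) [b0 [b1 [h0 h1 ey]]].
    by exists b0, b1; split=> //; apply: rst_step.
  by exists b0, b1; split=> //; apply: rst_sym; apply: rst_step.
have [c0 [c1 [h0' h1' ez]]] := IH _ _ ey.
by exists c0, c1; split=> //; [apply: rst_trans h0 h0' | apply: rst_trans h1 h1'].
Qed.

(* [covers p x]: x lies above p, or above phi p when p is in I; it will
   describe exactly the x with pi p <= pi x. *)
Definition covers p x := alg_le p x \/ (I p /\ alg_le (phi p) x).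

Lemma covers_add p a b : is_prime p -> covers p (a + b) -> covers p a \/ covers p b.
Proof.
move=> pp [/(proj2 pp) [h|h]|[Ip /(proj2 (phi_prime pp Ip)) [h|h]]];
  rewrite /covers; tauto.
Qed.

Definition twin_mult p x : xnat :=
  if excluded_middle_informative (I p) then mult (phi p) x else 0.

Definition weight p x : xnat := mult p x + twin_mult p x.

Lemma weight_morph p : is_prime p -> monoid_morph (weight p).
Proof.
move=> pp; have [m0 mD] := mult_morph refP pp.
have [t0 tD] : monoid_morph (twin_mult p).
  rewrite /twin_mult; case: (excluded_middle_informative (I p)) => [Ip|notIp] /=.
    apply: (mult_morph refP); exact: phi_prime.
  by split=> // *; rewrite addr0.
by split=> [|x y]; rewrite /weight ?m0 ?t0 // mD tD addrACA.
Qed.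

Lemma weight_phi p a : S_primes I' p -> I a -> weight p a = weight p (phi a).
Proof.
move=> [pp notI'p] Ia; rewrite /weight /twin_mult.
have -> : mult p (phi a) = 0.
  by apply/mult_eq0 => h; apply: notI'p; apply: ideal_le HI' h (phiI Ia).
case: (excluded_middle_informative (I p)) => [Ip|notIp] /=.
  have -> : mult (phi p) a = 0 by apply/mult_eq0; apply: phi_notle.
  by rewrite mult_phi // addr0 add0r.
have -> // : mult p a = 0.
by apply/mult_eq0 => h; apply: notIp; apply: ideal_le HI h Ia.
Qed.

Lemma weight_eq0 p x : weight p x = 0 <-> ~ covers p x.
Proof.
rewrite /weight /twin_mult /covers.
case: (excluded_middle_informative (I p)) => [Ip|notIp] /=; split.
- by move=> /xnat_add_eq0 [/mult_eq0 ? /mult_eq0 ?]; tauto.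
- by move=> hx; rewrite (proj2 (mult_eq0 _ _)) ?(proj2 (mult_eq0 _ _)) //; tauto.
- by rewrite addr0 => /mult_eq0; tauto.
- by rewrite addr0 => hx; apply/mult_eq0; tauto.
Qed.

Lemma weight_self p : is_prime p -> is_free p -> weight p p = Some 1%N.
Proof.
move=> pp fp; rewrite /weight /twin_mult (mult_self antiP fp).
case: (excluded_middle_informative (I p)) => [Ip|notIp] /=; last by rewrite addr0.
by have -> : mult (phi p) p = 0 by apply/mult_eq0; apply: phi_notle.
Qed.

Lemma weight_inf p x : weight p x = None ->
  (forall k : nat, alg_le (p *+ k) x) \/ (I p /\ forall k : nat, alg_le (phi p *+ k) x).
Proof.
rewrite /weight /twin_mult => /xnat_add_inf [/mult_inf|]; first by left.
by case: (excluded_middle_informative (I p)) => //= Ip /mult_inf; right.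
Qed.

Section Pushout.
Variables (Q : nmodType) (pi : P -> Q).
Hypotheses (pgenP : primely_generated P) (pushout : crowned_pushout I I' phi pi).
Implicit Types (X Y T W : Q).

Let pi_morph : monoid_morph pi. Proof. by case: pushout. Qed.
Let pi0 : pi 0 = 0. Proof. by case: pi_morph. Qed.
Let piD x y : pi (x + y) = pi x + pi y. Proof. by case: pi_morph => _ ->. Qed.
Let pi_phi x : I x -> pi x = pi (phi x).
Proof. by case: pushout => _ pi_phi _; apply: pi_phi. Qed.

Lemma pushout_lift (N : nmodType) (f : P -> N) : monoid_morph f ->
  (forall x, I x -> f x = f (phi x)) ->
  exists g : Q -> N, monoid_morph g /\ forall x, g (pi x) = f x.
Proof.
by move=> fm finv; case: pushout => _ _ /(_ N f fm finv) [g [gm gE _]]; exists g.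
Qed.

Lemma pushout_ext (N : nmodType) (g1 g2 : Q -> N) :
  monoid_morph g1 -> monoid_morph g2 ->
  (forall x, g1 (pi x) = g2 (pi x)) -> forall Y, g1 Y = g2 Y.
Proof.
move=> g1m g2m e12 Y.
have g1inv x : I x -> g1 (pi x) = g1 (pi (phi x)) by move=> Ix; rewrite (pi_phi Ix).
case: pushout => _ _ /(_ N _ (morph_comp pi_morph g1m) g1inv) [g [_ _ uniq]].
by rewrite (uniq g1 g1m (fun _ => erefl)) (uniq g2 g2m (fun x => esym (e12 x))).
Qed.

Lemma pi_twist x y : twist x y -> pi x = pi y.
Proof.
elim=> [u v [c [a [Ia -> ->]]]|//|u v _ IH|u v w _ IH1 _ IH2].
- by rewrite !piD (pi_phi Ia).
- by rewrite IH.
- by rewrite IH1 IH2.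
Qed.

Lemma pushout_to_quotient : exists g : Q -> quot twist_congruence,
  monoid_morph g /\ forall x, g (pi x) = qpi twist_congruence x.
Proof.
apply: pushout_lift; first exact: qpi_morph.
by move=> a Ia; apply: qpi_eq; apply: rst_step; exists 0, a; rewrite !add0r.
Qed.

Lemma pi_surj Y : exists x, pi x = Y.
Proof.
have [g [gm gE]] := pushout_to_quotient.
pose k (a : quot twist_congruence) := pi (val a).
have k_qpi x : k (qpi twist_congruence x) = pi x.
  by apply/esym/pi_twist; apply: (cong_repr_rel twist_congruence).
have km : monoid_morph k by split=> [|a b]; rewrite ?quot0E ?quot_addE k_qpi ?piD.
have id_morph : monoid_morph (@id Q) by [].
have kgY := pushout_ext (morph_comp gm km) id_morph
  (fun x => etrans (congr1 k (gE x)) (k_qpi x)) Y.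
by exists (val (g Y)).
Qed.

Lemma pi_kernel x y : pi x = pi y -> twist x y.
Proof.
have [g [_ gE]] := pushout_to_quotient.
by move=> exy; apply: (qpi_rel (c := twist_congruence)); rewrite -!gE exy.
Qed.

(* Refinement lifts from P: a twist of a0 + a1 into b0 + b1 decomposes into
   twists of a0 and a1, whose targets are then refined in P. *)
Lemma pushout_refinement : refinement_monoid Q.
Proof.
move=> A0 A1 B0 B1.
have [a0 <-] := pi_surj A0; have [a1 <-] := pi_surj A1.
have [b0 <-] := pi_surj B0; have [b1 <-] := pi_surj B1.
rewrite -!piD => /pi_kernel /twist_decompose /(_ a0 a1 erefl) [a0' [a1' [h0 h1 e]]].
have [c00 [c01 [c10 [c11 [e0 e1 e2 e3]]]]] := refP (esym e).
exists (pi c00), (pi c01), (pi c10), (pi c11); split; rewrite -piD.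
- by rewrite -e0; apply: pi_twist.
- by rewrite -e1; apply: pi_twist.
- by rewrite -e2.
- by rewrite -e3.
Qed.

(* For p in P(P) \ P(I'), the weight of p descends to Q; it detects the
   elements of Q above pi p. *)
Lemma detector p : S_primes I' p ->
  exists g : Q -> xnat, monoid_morph g /\ forall x, g (pi x) = weight p x.
Proof.
move=> hp; apply: pushout_lift; first by apply: weight_morph; case: hp.
by move=> a; apply: weight_phi.
Qed.

Lemma covers_pi p x : covers p x -> alg_le (pi p) (pi x).
Proof. by case=> [|[Ip]]; last rewrite (pi_phi Ip); apply: morph_le. Qed.

Lemma pi_le_covers p x : S_primes I' p -> alg_le (pi p) (pi x) -> covers p x.
Proof.
move=> hp; have [g [gm gE]] := detector hp.
move=> /(morph_le gm); rewrite !gE => hle; apply: NNPP => /weight_eq0 wx.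
rewrite wx in hle; have /weight_eq0 := xnat_le0 hle; apply.
by left; apply: alg_le_refl.
Qed.

Lemma S_prime_pi p : S_primes I' p -> is_prime (pi p).
Proof.
move=> hp; have [pp _] := hp; split.
  rewrite -pi0 => /(pi_le_covers hp) [|[Ip]]; first exact: (proj1 pp).
  exact: (proj1 (phi_prime pp Ip)).
move=> A B; have [a <-] := pi_surj A; have [b <-] := pi_surj B.
by rewrite -piD => /(pi_le_covers hp) /(covers_add pp) [] /covers_pi; tauto.
Qed.

Lemma prime_representative q : is_prime q -> exists2 p, S_primes I' p & pi p = pi q.
Proof.
move=> pq; have [I'q|notI'q] := classic (I' q); last by exists q.
have [p [pp Ip] <-] := prime_I'_preimage pq I'q.
by exists p; [split=> //; apply: prime_notI' | apply: pi_phi].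
Qed.

Lemma pi_prime q : is_prime q -> is_prime (pi q).
Proof. by move=> /prime_representative [p /S_prime_pi pp <-]. Qed.

Lemma pi_inj_S p q : S_primes I' p -> S_primes I' q -> pi p = pi q -> p = q.
Proof.
move=> hp hq epq; have [pp _] := hp; have [qp _] := hq.
have /(pi_le_covers hp) hpq : alg_le (pi p) (pi q) by rewrite epq; apply: alg_le_refl.
have /(pi_le_covers hq) hqp : alg_le (pi q) (pi p) by rewrite epq; apply: alg_le_refl.
case: hpq => [h1|[Ip h1]]; case: hqp => [h2|[Iq h2]].
- exact: antiP.
- by case: (phi_notle qp Iq Iq); apply: alg_le_trans h2 h1.
- by case: (phi_notle pp Ip Ip); apply: alg_le_trans h1 h2.
- by case: (phi_notle pp Ip Iq h1).
Qed.

(* Freeness is preserved, since the weight of a free p at p is 1. *)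
Lemma pushout_free p : S_primes I' p -> is_free (pi p) <-> is_free p.
Proof.
move=> hp; split=> [fpi epp|fp epp]; first by apply: fpi; rewrite -piD epp.
have [g [[_ gD] gE]] := detector hp.
by move: (congr1 g epp); rewrite gD gE (weight_self (proj1 hp) fp).
Qed.

Lemma free_weight_absorb s x : S_primes I' s -> is_free s -> weight s x = None ->
  exists q, alg_le q x /\ pi s + pi q = pi q.
Proof.
move=> [ps _] fs /weight_inf [hk|[Is hk]].
  by have [q [hq e]] := free_absorb antiP pgenP refP ps fs hk; exists q; rewrite -piD e.
have [q [hq e]] := free_absorb antiP pgenP refP (phi_prime ps Is) (phi_free Is fs) hk.
by exists q; rewrite (pi_phi Is) -piD e.
Qed.

Lemma absorb_prime X T s : S_primes I' s -> X = X + T -> alg_le (pi s) T -> X = X + pi s.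
Proof.
move=> hs eX [R eT]; have [x ex] := pi_surj X.
have above n : alg_le (pi s *+ n) X.
  have eXn : X = X + T *+ n.
    by elim: n => [|n IH]; [rewrite mulr0n addr0 | rewrite mulrS addrA -eX].
  by exists (X + R *+ n); rewrite {1}eXn eT mulrnDl addrCA.
have [fs|/NNPP ss] := classic (is_free s); last first.
  have [Z eZ] := above 1%N; rewrite mulr1n in eZ.
  by rewrite eZ addrAC -piD ss.
have [g [gm gE]] := detector hs.
case wx : (weight s x) => [m|].
  have := morph_le gm (above m.+1).
  rewrite -ex gE wx (morph_mulrn _ _ gm) gE (weight_self (proj1 hs) fs) xnat_natmul.
  by move=> /xnat_le; rewrite ltnn.
have [q [[w exq] e]] := free_weight_absorb hs fs wx.
by rewrite -ex exq piD addrAC [pi q + pi s]addrC e.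
Qed.

Lemma pushout_absorb X T W : X = X + T -> alg_le W T -> X = X + W.
Proof.
move=> eX hW; have [w ew] := pi_surj W; have [l [lp el]] := pgenP w.
have absorb_l q : q \in l -> X = X + pi q.
  move=> ql; have [p hp ep] := prime_representative (lp _ ql); rewrite -ep.
  apply: absorb_prime eX _ => //; rewrite ep; apply: alg_le_trans hW.
  by rewrite -ew el; apply: morph_le => //; apply: alg_le_sum_mem.
rewrite -ew el (morph_sum _ pi_morph).
elim: l {lp el} absorb_l => [|q l IH] absorb_l; first by rewrite big_nil addr0.
rewrite big_cons addrA -absorb_l ?mem_head //; apply: IH => q' q'l.
by apply: absorb_l; rewrite in_cons q'l orbT.
Qed.

(* If X <= Y <= X then X absorbs Y's excess over it. *)
Lemma pushout_antisymmetric : antisymmetric_monoid Q.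
Proof.
move=> X Y [Z eY] [W eX].
have e : X = X + (Z + W) by rewrite addrA -eY -eX.
by rewrite eY -(pushout_absorb e (alg_le_addr Z W)).
Qed.

Lemma pushout_primely_generated : primely_generated Q.
Proof.
move=> X; have [x <-] := pi_surj X; have [l [lp ->]] := pgenP x.
exists [seq pi q | q <- l]; split; last by rewrite big_map (morph_sum _ pi_morph).
by move=> _ /mapP [q ql ->]; apply: pi_prime; apply: lp.
Qed.

Lemma pushout_primes_onto Y : is_prime Y -> exists2 p, S_primes I' p & pi p = Y.
Proof.
move=> pY; have [y ey] := pi_surj Y; have [l [lp el]] := pgenP y.
have eY : Y = \sum_(u <- [seq pi q | q <- l]) u.
  by rewrite big_map -(morph_sum _ pi_morph) -el ey.
have := alg_le_refl Y; rewrite {2}eY => /(prime_le_sum pY) [_ /mapP [q ql ->] hYq].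
have hqY : alg_le (pi q) Y by rewrite eY; apply: alg_le_sum_mem; apply: map_f.
have [p hp ep] := prime_representative (lp _ ql).
by exists p; rewrite // ep; apply: pushout_antisymmetric.
Qed.

Lemma pushout_order p q : S_primes I' p -> S_primes I' q ->
  alg_le (pi p) (pi q) <-> gen_order I I' phi p q.
Proof.
move=> hp hq; split.
  move=> /(pi_le_covers hp) [h|[Ip h]]; apply: rt_step; split=> //; [by left | right].
  have [qp notI'q] := hq; split=> //.
  - by move=> Iq; apply: (phi_notle (proj1 hp) Ip Iq h).
  - by split=> // e; apply: notI'q; rewrite -e; apply: phiI.
elim=> [x y [_ _ h]|x|x y z _ h1 _ h2].
- by apply: covers_pi; case: h => [|[Ix _ _ [h _]]]; [left | right].
- exact: alg_le_refl.
- exact: alg_le_trans h1 h2.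
Qed.

End Pushout.

End IdealIsomorphism.

Theorem mainTheorem10 (P : nmodType) (I I' : P -> Prop) (phi : P -> P)
    (Q : nmodType) (pi : P -> Q) :
  primitive_monoid P ->
  order_ideal I -> order_ideal I' ->
  (forall x, I x -> I' x -> x = 0) ->
  ideal_iso I I' phi ->
  crowned_pushout I I' phi pi ->
  primitive_monoid Q /\
      (* pi maps P(P) \ P(I') bijectively onto P(Q) *)
      (forall p, S_primes I' p -> is_prime (pi p)) /\
      (forall p q, S_primes I' p -> S_primes I' q -> pi p = pi q -> p = q) /\
      (forall q, is_prime q -> exists2 p, S_primes I' p & pi p = q) /\
      (* the induced order *)
      (forall p q, S_primes I' p -> S_primes I' q ->
         (alg_le (pi p) (pi q) <-> gen_order I I' phi p q)) /\
      (* freeness is preserved and reflected *)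
      (forall p, S_primes I' p -> (is_free (pi p) <-> is_free p)).
Proof.
move=> [antiP pgenP refP] HI HI' disjI isoI pushout.
split; [split|split; [|split; [|split; [|split]]]].
- exact (pushout_antisymmetric antiP refP HI HI' disjI isoI pgenP pushout).
- exact (pushout_primely_generated refP HI HI' disjI isoI pgenP pushout).
- exact (pushout_refinement refP HI HI' isoI pushout).
- exact (S_prime_pi refP HI HI' disjI isoI pushout).
- exact (pi_inj_S antiP refP HI HI' disjI isoI pushout).
- exact (pushout_primes_onto antiP refP HI HI' disjI isoI pgenP pushout).
- exact (pushout_order refP HI HI' disjI isoI pushout).
- exact (pushout_free antiP refP HI HI' disjI isoI pushout).
Qed.
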